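(* Let $\mathcal{X}$ be a finite set of $n$ items and let $\mathcal{D}=\{(x_j,C_j)\}_{j=1}^m$ be a dataset of choices, $x_j\in C_j\subseteq\mathcal{X}$, $|C_j|\ge 2$. The full-rank CDM on $\mathcal{X}$ is identifiable from $\mathcal{D}$ if and only if $\mathrm{rank}(G(\mathcal{D}))=n(n-1)-1$.
   Context: A (full-rank) CDM on $\mathcal{X}$ has parameter vector $u=(u_{xz})_{x\neq z}\in\mathbb{R}^{n(n-1)}$ and choice probabilities, for $C\subseteq\mathcal{X}$, $|C|\ge2$, $x\in C$, $P_u(x\mid C)=\dfrac{\exp\big(\sum_{z\in C\setminus\{x\}}u_{xz}\big)}{\sum_{y\in C}\exp\big(\sum_{z\in C\setminus\{y\}}u_{yz}\big)}$; these are invariant under adding a common constant to all entries of $u$. The CDM is identifiable from $\mathcal{D}$ if whenever $u,u'$ satisfy $P_u(x\mid C)=P_{u'}(x\mid C)$ for every distinct set $C$ among $C_1,\dots,C_m$ and every $x\in C$, then $u'-u=\alpha\mathbf{1}$ for some $\alpha\in\mathbb{R}$. For a set $C$ and $x\in C$, let $g_{x,C}\in\mathbb{Z}^{n(n-1)}$ be the integer vector with $g_{x,C}^{T}u=\sum_{y\in C\setminus\{x\}}\Big([u_{xy}-u_{yx}]+\sum_{z\in C\setminus\{x,y\}}[u_{xz}-u_{yz}]\Big)$ for all $u$. $G(\mathcal{D})$ is the integer matrix with one row $g_{x,C_j}^{T}$ for every datapoint $j$ and every item $x\in C_j$. *)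

From HB Require Import structures.
From mathcomp Require Import all_boot all_order all_algebra.
From mathcomp Require Import all_classical all_reals all_analysis.
Set Implicit Arguments. Unset Strict Implicit. Unset Printing Implicit Defensive.
Import Order.TTheory GRing.Theory Num.Theory.
Local Open Scope ring_scope.

(* Items: 'I_n.  Parameter coordinates: ordered pairs (x,z) with x <> z;
   there are n(n-1) of them. *)
Definition pairT (n : nat) := {p : 'I_n * 'I_n | p.1 != p.2}.
HB.instance Definition _ n := Finite.on (pairT n).

(* u_{ab} for a parameter vector u (0 on the diagonal, which never occurs
   in the formulas below with a = b). *)
Definition uent (R : pzRingType) n (u : pairT n -> R) (a b : 'I_n) : R :=
  \sum_(p : pairT n | val p == (a, b)) u p.

Definition cdm_score (R : pzRingType) n (u : pairT n -> R) (x : 'I_n)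
  (C : {set 'I_n}) : R :=
  \sum_(z in C | z != x) uent u x z.

Definition cdm_prob (R : realType) n (u : pairT n -> R) (x : 'I_n)
  (C : {set 'I_n}) : R :=
  expR (cdm_score u x C) / \sum_(y in C) expR (cdm_score u y C).

Definition cdm_identifiable (R : realType) n m (C : 'I_m -> {set 'I_n}) :=
  forall u u' : pairT n -> R,
    (forall j : 'I_m, forall y, y \in C j -> cdm_prob u y (C j) = cdm_prob u' y (C j)) ->
    exists alpha : R, forall p, u' p - u p = alpha.

(* the linear form u |-> g_{x,C}^T u *)
Definition gform (R : pzRingType) n (x : 'I_n) (C : {set 'I_n}) (u : pairT n -> R) : R :=
  \sum_(y in C | y != x)
    ((uent u x y - uent u y x)
     + \sum_(z in C | (z != x) && (z != y)) (uent u x z - uent u y z)).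

Definition gcoef n (x : 'I_n) (C : {set 'I_n}) (p : pairT n) : int :=
  gform x C (fun q : pairT n => (q == p)%:R).

(* rows of G(D): one per datapoint j and item x in C_j *)
Definition rowT n m (C : 'I_m -> {set 'I_n}) :=
  {jx : 'I_m * 'I_n | jx.2 \in C jx.1}.
HB.instance Definition _ n m (C : 'I_m -> {set 'I_n}) := Finite.on (rowT C).

Definition Gmat n m (C : 'I_m -> {set 'I_n}) : 'M[int]_(#|{: rowT C}|, #|{: pairT n}|) :=
  \matrix_(r, c) gcoef (val (enum_val r)).2 (C (val (enum_val r)).1) (enum_val c).

Definition Grank n m (C : 'I_m -> {set 'I_n}) : nat :=
  \rank (map_mx (fun z : int => z%:~R : rat) (Gmat C)).

From HB Require Import structures.
From mathcomp Require Import all_boot all_order all_algebra.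
From mathcomp Require Import all_classical all_reals all_analysis.
From mathcomp Require Import zify.
Set Implicit Arguments. Unset Strict Implicit. Unset Printing Implicit Defensive.
Import Order.TTheory GRing.Theory Num.Theory.
Local Open Scope ring_scope.

(* Writing s_x(u) for the exponent of x in C, the row g_{x,C} evaluates u to
   sum_{y in C} (s_x(u) - s_y(u)), so G(D) annihilates u exactly when the
   scores of u are constant on every choice set of D.  Softmax probabilities
   over C agree iff the two score vectors differ by a constant on C, and
   scores are linear in u; hence identifiability says that the kernel of G(D)
   is the line of constant vectors.  Constants always lie in that kernel, so
   this is rank G(D) = n(n-1) - 1. *)

Lemma linear_fun_sum_delta (R : pzRingType) (I : finType) (F : (I -> R) -> R) :
  (forall k u v, F (fun i => k * u i + v i) = k * F u + F v) ->
  forall u, F u = \sum_i u i * F (fun j => (j == i)%:R).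
Proof.
move=> Flin u.
have F0 : F (fun=> 0) = 0.
  have := Flin 1 (fun=> 0) (fun=> 0).
  have -> : (fun _ : I => 1 * 0 + 0) = (fun=> 0 : R) by apply/funext => i; rewrite mulr0 addr0.
  by rewrite mul1r => F0_double; apply: (addrI (F (fun=> 0))); rewrite -F0_double addr0.
transitivity (F (fun j => \sum_i u i * (j == i)%:R)).
  congr F; apply/funext => j; rewrite (bigD1 j) //= eqxx mulr1 big1 ?addr0 // => i.
  by rewrite eq_sym => /negbTE ->; rewrite mulr0.
elim: (index_enum I) => [|i s IH].
  by rewrite big_nil -F0; congr F; apply/funext => j; rewrite big_nil.
by rewrite big_cons -IH -Flin; congr F; apply/funext => j; rewrite big_cons.
Qed.

Section LinearForms.
Variables (R : pzRingType) (n : nat).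
Implicit Types (u v : pairT n -> R) (k : R) (x y : 'I_n) (C : {set 'I_n}).

Lemma uent_lin k u v a b :
  uent (fun q => k * u q + v q) a b = k * uent u a b + uent v a b.
Proof. by rewrite /uent big_split mulr_sumr. Qed.

Lemma uent_const (c : R) (a b : 'I_n) : a != b -> uent (fun=> c) a b = c.
Proof. by move=> ab; rewrite /uent (big_pred1 (exist _ (a, b) ab : pairT n)). Qed.

Lemma gform_lin x C k u v :
  gform x C (fun q => k * u q + v q) = k * gform x C u + gform x C v.
Proof.
have linB (a b a' b' : R) : (k * a + a') - (k * b + b') = k * (a - b) + (a' - b').
  by rewrite mulrBr opprD addrACA.
rewrite /gform mulr_sumr -big_split; apply: eq_bigr => y _ /=.
rewrite !uent_lin linB [in RHS]mulrDr addrACA; congr (_ + _).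
rewrite mulr_sumr -big_split; apply: eq_bigr => z _.
by rewrite !uent_lin linB.
Qed.

Lemma gform_const x C (c : R) : gform x C (fun=> c) = 0.
Proof.
rewrite /gform big1 // => y /andP[_ yx]; have xy : x != y by rewrite eq_sym.
rewrite !uent_const // subrr add0r big1 // => z /andP[_ /andP[zx zy]].
have xz : x != z by rewrite eq_sym.
have yz : y != z by rewrite eq_sym.
by rewrite !uent_const // subrr.
Qed.

End LinearForms.

Section AdditiveImage.
Variables (R S : pzRingType) (f : {additive R -> S}) (n : nat) (u : pairT n -> R).

Lemma uent_raddf a b : f (uent u a b) = uent (fun q => f (u q)) a b.
Proof. exact: raddf_sum. Qed.

Lemma gform_raddf x C : f (gform x C u) = gform x C (fun q => f (u q)).
Proof.
rewrite /gform raddf_sum; apply: eq_bigr => y _.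
rewrite raddfD raddfB !uent_raddf; congr (_ + _).
by rewrite raddf_sum; apply: eq_bigr => z _; rewrite raddfB !uent_raddf.
Qed.

End AdditiveImage.

Lemma gform_gcoef (R : pzRingType) n x C (u : pairT n -> R) :
  gform x C u = \sum_p u p * (gcoef x C p)%:~R.
Proof.
rewrite (linear_fun_sum_delta (@gform_lin R n x C) u); apply: eq_bigr => p _.
rewrite /gcoef gform_raddf; congr (_ * gform _ _ _); apply/funext => q /=.
by case: (q == p).
Qed.

Section Scores.
Variables (R : pzRingType) (n : nat).
Implicit Types (u : pairT n -> R) (x y : 'I_n) (C : {set 'I_n}).

Lemma cdm_score_sub u u' x C :
  cdm_score (fun q => u' q - u q) x C = cdm_score u' x C - cdm_score u x C.
Proof. by rewrite /cdm_score -sumrB; apply: eq_bigr => z _; rewrite /uent -sumrB. Qed.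

Lemma cdm_score_diff u C x y : x \in C -> y \in C -> x != y ->
  cdm_score u x C - cdm_score u y C =
  (uent u x y - uent u y x) + \sum_(z in C | (z != x) && (z != y)) (uent u x z - uent u y z).
Proof.
move=> xC yC xy; rewrite /cdm_score (bigD1 y) 1?eq_sym ?xy ?yC //=.
rewrite [X in _ - X](bigD1 x) ?xC ?xy //=.
rewrite sumrB opprD addrACA; congr (_ + (_ - _)); apply: eq_bigl => z.
  by rewrite andbA.
by rewrite -andbA [(z != y) && _]andbC.
Qed.

Lemma gform_cdm_score u C x : x \in C ->
  gform x C u = \sum_(y in C) (cdm_score u x C - cdm_score u y C).
Proof.
move=> xC; rewrite [RHS](bigD1 x) //= subrr add0r.
by apply: eq_bigr => y /andP[yC yx]; rewrite cdm_score_diff // eq_sym.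
Qed.

End Scores.

Lemma gform_eq0P (R : numDomainType) n (u : pairT n -> R) (C : {set 'I_n}) :
  (forall x, x \in C -> gform x C u = 0) <->
  {in C &, forall x y, cdm_score u x C = cdm_score u y C}.
Proof.
split=> [g0 x y xC yC | eq_score x xC]; last first.
  by rewrite gform_cdm_score // big1 // => y yC; rewrite (eq_score x y) ?subrr.
have card_score z : z \in C -> cdm_score u z C *+ #|C| = \sum_(y in C) cdm_score u y C.
  by move=> zC; apply/eqP; rewrite -subr_eq0 -sumr_const -sumrB -gform_cdm_score ?g0.
have C_gt0 : (0 < #|C|)%N by apply/card_gt0P; exists x.
by apply: (pmulrnI C_gt0); rewrite !card_score.
Qed.

Lemma softmax_eqP (R : realType) (T : finType) (A : {pred T}) (a b : T -> R) :
  (forall y, y \in A ->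
     expR (a y) / \sum_(z in A) expR (a z) = expR (b y) / \sum_(z in A) expR (b z)) <->
  {in A &, forall x y, b x - a x = b y - a y}.
Proof.
have Z_neq0 (c : T -> R) y : y \in A -> \sum_(z in A) expR (c z) != 0.
  move=> yA; rewrite lt0r_neq0 // (bigD1 y) //= ltr_pwDl ?expR_gt0 //.
  by apply: sumr_ge0 => z _; exact: expR_ge0.
split=> [eq_prob x y xA yA | diff_const y yA].
  have ratio z : z \in A ->
      expR (b z - a z) = (\sum_(w in A) expR (b w)) / \sum_(w in A) expR (a w).
    move=> zA; have expR_neq0 : expR (a z) != 0 by rewrite gt_eqF ?expR_gt0.
    move/eqP: (eq_prob z zA); rewrite expRB !eqr_div ?(Z_neq0 _ z zA) // => /eqP h.
    by apply/eqP; rewrite eqr_div ?(Z_neq0 _ z zA) // -h mulrC.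
  by apply: expR_inj; rewrite !ratio.
set k := b y - a y.
have bE z : z \in A -> expR (b z) = expR (a z) * expR k.
  by move=> zA; rewrite -expRD /k -(diff_const z y zA yA) addrC subrK.
rewrite (eq_bigr _ bE) -mulr_suml bE // invfM mulrACA divff ?mulr1 //.
by rewrite gt_eqF ?expR_gt0.
Qed.

Lemma cdm_prob_eq_gform (R : realType) n (u u' : pairT n -> R) (C : {set 'I_n}) :
  (forall y, y \in C -> cdm_prob u y C = cdm_prob u' y C) <->
  (forall y, y \in C -> gform y C (fun q => u' q - u q) = 0).
Proof.
apply: (iff_trans (softmax_eqP C (cdm_score u ^~ C) (cdm_score u' ^~ C))).
apply: (iff_trans _ (iff_sym (gform_eq0P _ C))).
by split=> eq_score x y xC yC; move: (eq_score x y xC yC); rewrite !cdm_score_sub.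
Qed.

Lemma cdm_identifiable_gform (R : realType) n m (C : 'I_m -> {set 'I_n}) :
  cdm_identifiable R C <->
  (forall w : pairT n -> R, (forall j y, y \in C j -> gform y (C j) w = 0) ->
   exists a, forall p, w p = a).
Proof.
split=> [ident w w_ker | ker_const u u' eq_prob].
  have [|a ha] := ident (fun=> 0) w.
    move=> j; apply/cdm_prob_eq_gform => y yC.
    by rewrite -[RHS](w_ker j y yC); congr gform; apply/funext => p; rewrite subr0.
  by exists a => p; rewrite -(ha p) subr0.
by apply: ker_const => j; apply/cdm_prob_eq_gform/eq_prob.
Qed.

Lemma card_pairT n : #|{: pairT n}| = (n * (n - 1))%N.
Proof.
rewrite card_sig -sum1_card.
transitivity (\sum_(i < n) \sum_(j < n) (i != j : nat))%N.
  rewrite pair_big /= big_mkcond /=; apply: eq_bigr => [[i j]] _ /=.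
  by rewrite !inE /=; case: (i != j).
rewrite (eq_bigr (fun _ => n.-1)) ?sum_nat_const ?card_ord ?subn1 // => i _.
rewrite (eq_bigr (fun j => if j != i then 1 else 0)%N) => [|j _]; last by rewrite eq_sym.
by rewrite -big_mkcond sum1_card cardC1 card_ord.
Qed.

Lemma kermx_sub_const1 (F : fieldType) N k (A : 'M[F]_(N, k)) :
  (const_mx 1 : 'rV[F]_N) *m A = 0 ->
  (kermx A <= (const_mx 1 : 'rV_N))%MS = (\rank A == N.-1).
Proof.
case: N A => [|N] A one_ker.
  by rewrite flatmx0 sub0mx /= -leqn0 rank_leq_row.
have one_neq0 : const_mx 1 != 0 :> 'rV[F]_N.+1.
  by apply/eqP => /matrixP/(_ 0 0); rewrite !mxE; apply/eqP; exact: oner_neq0.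
have /mxrank_leqif_sup one_sub : ((const_mx 1 : 'rV_N.+1) <= kermx A)%MS.
  by rewrite sub_kermx one_ker.
rewrite -one_sub.2 rank_rV one_neq0 mxrank_ker.
have := rank_leq_row A; move: (\rank A) => r r_le.
by apply/eqP/eqP; lia.
Qed.

Section GMatrix.
Variables (R : numFieldType) (n m : nat) (C : 'I_m -> {set 'I_n}).
Local Notation N := #|{: pairT n}|.

Definition Gmx : 'M[R]_(#|{: rowT C}|, N) := map_mx intr (Gmat C).

Lemma Grank_Gmx : Grank C = \rank Gmx.
Proof.
rewrite /Grank -(mxrank_map (ratr : {rmorphism rat -> R})); congr (\rank _).
by apply/matrixP => i j; rewrite !mxE rmorph_int.
Qed.

Definition fun_of_rV (v : 'rV[R]_N) (p : pairT n) : R := v 0 (enum_rank p).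

Definition rV_of_fun (u : pairT n -> R) : 'rV[R]_N := \row_c u (enum_val c).

Lemma rV_of_funK : cancel rV_of_fun fun_of_rV.
Proof. by move=> u; apply/funext => p; rewrite /fun_of_rV mxE enum_rankK. Qed.

Lemma mul_rV_trGmx (v : 'rV[R]_N) r :
  (v *m Gmx^T) 0 r = gform (val (enum_val r)).2 (C (val (enum_val r)).1) (fun_of_rV v).
Proof.
rewrite mxE gform_gcoef [RHS](reindex (fun c : 'I_N => enum_val c)) /=.
  by apply: eq_bigr => c _; rewrite !mxE /fun_of_rV enum_valK.
exact/onW_bij/enum_val_bij.
Qed.

Lemma sub_kermx_trGmxP (v : 'rV[R]_N) : (v <= kermx Gmx^T)%MS <->
  (forall j y, y \in C j -> gform y (C j) (fun_of_rV v) = 0).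
Proof.
rewrite sub_kermx; split=> [/eqP/matrixP vG0 j y yC | v_ker].
  have := vG0 0 (enum_rank (exist _ (j, y) yC : rowT C)).
  by rewrite mul_rV_trGmx enum_rankK mxE.
apply/eqP/matrixP => i r; rewrite ord1 mul_rV_trGmx mxE.
by case: (enum_val r) => [[j y] yC]; exact: v_ker.
Qed.

Lemma const1_mul_trGmx : (const_mx 1 : 'rV[R]_N) *m Gmx^T = 0.
Proof.
apply/eqP; rewrite -sub_kermx; apply/sub_kermx_trGmxP => j y _.
rewrite (_ : fun_of_rV _ = fun=> 1) ?gform_const //.
by apply/funext => p; rewrite /fun_of_rV mxE.
Qed.

End GMatrix.

Lemma cdm_identifiable_kermx (R : realType) n m (C : 'I_m -> {set 'I_n}) :
  cdm_identifiable R C <-> (kermx (Gmx R C)^T <= (const_mx 1 : 'rV_#|{: pairT n}|))%MS.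
Proof.
rewrite cdm_identifiable_gform; split=> [ker_const | ker_sub w w_ker].
  apply/rV_subP => v /sub_kermx_trGmxP/ker_const [a ha]; apply/sub_rVP; exists a.
  by apply/rowP => i; rewrite !mxE mulr1 -(ha (enum_val i)) /fun_of_rV enum_valK.
have /sub_rVP [a ha] : (rV_of_fun w <= (const_mx 1 : 'rV_#|{: pairT n}|))%MS.
  by apply: submx_trans ker_sub; apply/sub_kermx_trGmxP; rewrite rV_of_funK.
by exists a => p; rewrite -(rV_of_funK w) /fun_of_rV ha !mxE mulr1.
Qed.

Local Close Scope ring_scope.

Theorem theorem4 (R : realType) (n m : nat) (x : 'I_m -> 'I_n)
  (C : 'I_m -> {set 'I_n})
  (hx : forall j, x j \in C j) (hC : forall j, 2 <= #|C j|) :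
  cdm_identifiable R C <-> Grank C = (n * (n - 1) - 1)%N.
Proof.
rewrite cdm_identifiable_kermx kermx_sub_const1 ?const1_mul_trGmx //.
by rewrite mxrank_tr -Grank_Gmx card_pairT -subn1; split=> /eqP.
Qed.
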